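(* Let $S$ be a monoid such that the word $xyyx$ is an isoterm for $S$. Let $\mathbf u$ be a word and $x,y\in\mathrm{con}(\mathbf u)$ distinct variables such that: (i) each of $x,y$ occurs at most twice in $\mathbf u$; (ii) ${}_{1\mathbf u}x<_{\mathbf u}{}_{1\mathbf u}y$; (iii) if both $x$ and $y$ occur twice in $\mathbf u$, then $\mathbf u$ contains a linear variable $t$ with ${}_{1\mathbf u}y<_{\mathbf u}{}_{\mathbf u}t<_{\mathbf u}{}_{2\mathbf u}y$ and ${}_{2\mathbf u}x<_{\mathbf u}{}_{\mathbf u}t<_{\mathbf u}{}_{2\mathbf u}y$. Then the set $\{{}_{1\mathbf u}x,{}_{1\mathbf u}y\}$ is stable in $\mathbf u$ with respect to $S$.
   Context: Variables are letters of a countably infinite alphabet; words are elements of the free semigroup on it. A monoid $S$ satisfies $\mathbf u\approx\mathbf v$ if both sides are equal under every evaluation of variables in $S$. A word $\mathbf w$ is an isoterm for $S$ if $S$ satisfies no identity $\mathbf w\approx\mathbf w'$ with $\mathbf w'\ne\mathbf w$. $\mathrm{occ}_{\mathbf u}(x)$ is the number of occurrences of $x$ in $\mathbf u$, $\mathrm{con}(\mathbf u)$ the set of variables occurring in $\mathbf u$; $t$ is linear in $\mathbf u$ if it occurs exactly once, ${}_{\mathbf u}t$ denoting that occurrence. ${}_{i\mathbf u}x$ is the $i$-th occurrence of $x$ in $\mathbf u$; $<_{\mathbf u}$ is the order of occurrences by position. $l_{\mathbf u,\mathbf v}$ maps ${}_{i\mathbf u}x\mapsto{}_{i\mathbf v}x$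 for $i\le\min(\mathrm{occ}_{\mathbf u}(x),\mathrm{occ}_{\mathbf v}(x))$. A set $X$ of occurrences in $\mathbf u$ is stable in $\mathbf u$ with respect to $S$ if for every identity $\mathbf u\approx\mathbf v$ satisfied by $S$: each variable having an occurrence in $X$ occurs the same number of times in $\mathbf u$ and $\mathbf v$, and $l_{\mathbf u,\mathbf v}$ is defined on $X$ and is an order isomorphism from $(X,<_{\mathbf u})$ onto $(l_{\mathbf u,\mathbf v}(X),<_{\mathbf v})$. *)

From mathcomp Require Import all_boot.
Set Implicit Arguments. Unset Strict Implicit. Unset Printing Implicit Defensive.

Record monoid := Monoid {
  mcar :> Type;
  mmul : mcar -> mcar -> mcar;
  mone : mcar;
  mmulA : forall a b c, mmul a (mmul b c) = mmul (mmul a b) c;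
  mmul1 : forall a, mmul mone a = a;
  mmulr1 : forall a, mmul a mone = a }.

(* Variables are natural numbers (a countably infinite alphabet);
   words are nonempty sequences of variables (free semigroup). *)
Definition word := seq nat.
Definition is_word (w : word) : bool := w != [::].

Definition eval (S : monoid) (phi : nat -> S) (w : word) : S :=
  foldr (fun x acc => mmul (phi x) acc) (mone S) w.

Definition satisfies (S : monoid) (u v : word) : Prop :=
  forall phi : nat -> S, eval phi u = eval phi v.

Definition isoterm (S : monoid) (w : word) : Prop :=
  forall w' : word, is_word w' -> satisfies S w w' -> w' = w.

Definition occ (u : word) (x : nat) : nat := count_mem x u.

(* An occurrence is a pair (x, i) meaning the i-th occurrence of x (i >= 1). *)
Definition occurrence := (nat * nat)%type.

(* position (0-based) in u of the i-th occurrence (1-based) of x *)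
Definition pos (u : word) (o : occurrence) : nat :=
  nth 0 [seq j <- iota 0 (size u) | nth 0 u j == o.1] o.2.-1.

Definition is_occ (u : word) (o : occurrence) : bool :=
  (0 < o.2) && (o.2 <= occ u o.1).

(* X is stable in u with respect to S: for every identity u ~ v of S,
   each variable of X has the same number of occurrences in u and v,
   l_{u,v} is defined on X, and l_{u,v} is an order isomorphism from
   (X, <_u) onto (l_{u,v}(X), <_v).  Since l_{u,v} maps (x,i) to (x,i),
   it is injective; so being an order isomorphism onto its image amounts
   to preserving and reflecting the strict order. *)
Definition stable (S : monoid) (u : word) (X : seq occurrence) : Prop :=
  (forall o, o \in X -> is_occ u o) /\
  forall v : word, is_word v -> satisfies S u v ->
    (forall o, o \in X -> occ u o.1 = occ v o.1) /\
    (forall o, o \in X -> is_occ v o) /\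
    (forall o1 o2, o1 \in X -> o2 \in X -> (pos u o1 < pos u o2) = (pos v o1 < pos v o2)).

From mathcomp Require Import all_boot.
Set Implicit Arguments. Unset Strict Implicit. Unset Printing Implicit Defensive.

(* Identities of S survive deleting and renaming variables, and the relative
   order of two kept occurrences is unchanged by this.  Projecting u and v onto
   x, y (and the separating letter t, when x and y both occur twice) thus gives
   an identity U ~ V between words of length at most five over three letters.
   For each such U, every V of the same content in which the first 1 precedes
   the first 0 is refuted by a substitution instance of U ~ V (or V ~ U) that
   rewrites the factor of xyyx it matches, contradicting that xyyx is an
   isoterm; this finite search is done by computation.  That occurrence
   counts 1 and 2 are preserved follows the same way from x and xx. *)

Definition subst (sig : nat -> word) (p : word) : word := flatten (map sig p).

Section Identities.
Variable S : monoid.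

Lemma eval_cat (phi : nat -> S) (w1 w2 : word) :
  eval phi (w1 ++ w2) = mmul (eval phi w1) (eval phi w2).
Proof. by elim: w1 => [|z w IH] /=; rewrite ?mmul1 // IH mmulA. Qed.

Lemma eval_subst (phi : nat -> S) sig p :
  eval phi (subst sig p) = eval (fun z => eval phi (sig z)) p.
Proof. by elim: p => [|z p IH] //=; rewrite eval_cat IH. Qed.

Lemma eval_pmap (pi : nat -> option nat) (phi : nat -> S) w :
  eval phi (pmap pi w) = eval (fun z => oapp phi (mone S) (pi z)) w.
Proof. by elim: w => [|z w IH] //=; case: (pi z) => [c|] /=; rewrite IH ?mmul1. Qed.

Lemma satisfies_sym u v : satisfies S u v -> satisfies S v u.
Proof. by move=> uv phi; rewrite uv. Qed.

Lemma satisfies_subst_ctx p q a b sig : satisfies S p q ->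
  satisfies S (a ++ subst sig p ++ b) (a ++ subst sig q ++ b).
Proof. by move=> pq phi; rewrite !eval_cat !eval_subst pq. Qed.

Lemma satisfies_pmap pi u v : satisfies S u v -> satisfies S (pmap pi u) (pmap pi v).
Proof. by move=> uv phi; rewrite !eval_pmap uv. Qed.

Lemma isoterm_subst_ctx w p q a b sig : isoterm S w -> satisfies S p q ->
  a ++ subst sig p ++ b = w -> is_word (a ++ subst sig q ++ b) ->
  a ++ subst sig q ++ b = w.
Proof.
move=> iso pq ew nz; rewrite -ew in iso *.
exact: iso _ nz (satisfies_subst_ctx _ _ _ pq).
Qed.

End Identities.

Lemma occ_gt0 u x : x \in u -> 0 < occ u x.
Proof. by rewrite /occ -has_count has_pred1. Qed.

Lemma count_pmap (pi : nat -> option nat) c w :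
  count_mem c (pmap pi w) = count (fun z => pi z == Some c) w.
Proof. by elim: w => [|z w IH] //=; case: (pi z) => [d|] /=; rewrite IH. Qed.

Definition positions (w : word) (a : nat) : seq nat :=
  [seq j <- iota 0 (size w) | nth 0 w j == a].

Lemma positions_cons z w a :
  positions (z :: w) a = (if z == a then [:: 0] else [::]) ++ map succn (positions w a).
Proof.
rewrite /positions /= -add1n iotaDl filter_map.
by case: (z == a).
Qed.

Lemma size_positions w a : size (positions w a) = occ w a.
Proof.
elim: w => [|z w IH] //.
by rewrite positions_cons size_cat size_map IH /occ /=; case: (z == a).
Qed.

Lemma pos_cons z w a i : 0 < i -> i <= occ (z :: w) a ->
  pos (z :: w) (a, i) = if z == a then (if i == 1 then 0 else (pos w (a, i.-1)).+1)
                        else (pos w (a, i)).+1.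
Proof.
have posE w' k : pos w' (a, k) = nth 0 (positions w' a) k.-1 by [].
rewrite !posE positions_cons /occ /=.
move=> i0; case: (z == a) => /= iocc.
- case: i i0 iocc => [|[|i]] //= _ iocc.
  by rewrite (nth_map 0) // size_positions -ltnS.
- by rewrite (nth_map 0) // size_positions; case: i i0 iocc.
Qed.

Lemma occ_pmap_relabel (pi : nat -> option nat) a a' w :
  (forall z, (pi z == Some a') = (z == a)) -> occ (pmap pi w) a' = occ w a.
Proof. by move=> pi_a; rewrite /occ count_pmap; apply: eq_count => z; rewrite pi_a. Qed.

Section Relabel.
Variables (pi : nat -> option nat) (a b a' b' : nat).
Hypotheses (neq_ab : a != b) (pi_a : forall z, (pi z == Some a') = (z == a))
  (pi_b : forall z, (pi z == Some b') = (z == b)).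

Lemma pos_pmap_relabel w i j : 0 < i <= occ w a -> 0 < j <= occ w b ->
  (pos (pmap pi w) (a', i) < pos (pmap pi w) (b', j)) = (pos w (a, i) < pos w (b, j)).
Proof.
elim: w i j => [|z w IH] i j /andP[i0 ia] /andP[j0 jb]; first by case: i i0 ia.
have ia' := ia; have jb' := jb.
rewrite -(occ_pmap_relabel _ pi_a) in ia'; rewrite -(occ_pmap_relabel _ pi_b) in jb'.
rewrite (pos_cons i0 ia) (pos_cons j0 jb).
rewrite /occ /= in ia jb; rewrite /= in ia' jb' *.
case piz: (pi z) ia' jb' => [c|] /= ia' jb'.
- rewrite (pos_cons i0 ia') (pos_cons j0 jb').
  have -> : (c == a') = (z == a) by rewrite -pi_a piz (inj_eq Some_inj).
  have -> : (c == b') = (z == b) by rewrite -pi_b piz (inj_eq Some_inj).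
  clear ia' jb'; case: (eqVneq z a) ia jb => [->|nza] ia jb.
  + rewrite (negbTE neq_ab) /= in jb *.
    case: (eqVneq i 1) => [//|ni1].
    rewrite !ltnS; apply: IH; last by rewrite j0.
    by case: i i0 ia ni1 => [|[|i]].
  + case: (eqVneq z b) ia jb => [zb|nzb] ia jb /=.
    * case: (eqVneq j 1) => [//|nj1].
      rewrite !ltnS; apply: IH; first by rewrite i0.
      by case: j j0 jb nj1 => [|[|j]].
    * by rewrite !ltnS; apply: IH; rewrite ?i0 ?j0.
- have nza : z != a by rewrite -pi_a piz.
  have nzb : z != b by rewrite -pi_b piz.
  rewrite (negbTE nza) (negbTE nzb) /= in ia jb *.
  by rewrite ltnS; apply: IH; rewrite ?i0 ?j0.
Qed.

End Relabel.

Definition proj (s : seq nat) (z : nat) : option nat :=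
  if z \in s then Some (index z s) else None.

Section Projection.
Variable s : seq nat.
Hypothesis uniq_s : uniq s.

Lemma proj_eq_Some i z : i < size s -> (proj s z == Some i) = (z == nth 0 s i).
Proof.
rewrite /proj => lti; case: ifPn => [zs|/negPf zs].
  by rewrite (inj_eq Some_inj); apply/eqP/eqP => [<-|->]; rewrite ?nth_index ?index_uniq.
by apply/esym/eqP => ez; rewrite ez mem_nth in zs.
Qed.

Lemma all_pmap_proj w : all (fun c => c < size s) (pmap (proj s) w).
Proof.
elim: w => [|z w IH] //=; rewrite /proj.
by case: ifP => [zs|_] /=; rewrite ?IH ?index_mem ?zs.
Qed.

Lemma occ_pmap_proj w i : i < size s -> occ (pmap (proj s) w) i = occ w (nth 0 s i).
Proof. by move=> lti; apply: occ_pmap_relabel => z; rewrite proj_eq_Some. Qed.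

Lemma pos_pmap_proj w i j k l : i < size s -> j < size s -> i != j ->
  0 < k <= occ w (nth 0 s i) -> 0 < l <= occ w (nth 0 s j) ->
  (pos (pmap (proj s) w) (i, k) < pos (pmap (proj s) w) (j, l)) =
  (pos w (nth 0 s i, k) < pos w (nth 0 s j, l)).
Proof.
move=> lti ltj nij; apply: pos_pmap_relabel => [|z|z]; rewrite ?proj_eq_Some //.
by rewrite nth_uniq.
Qed.

End Projection.

Definition xyyx : word := [:: 0; 1; 1; 0].

Lemma nseq_occ0 w : all (fun c => c < 1) w -> w = nseq (occ w 0) 0.
Proof. by elim: w => [|[|z] w IH] //= /IH {1}->. Qed.

Lemma size_subst_letter c w : size (subst (fun=> [:: c]) w) = size w.
Proof. by elim: w => //= z w ->. Qed.

Lemma occ_satisfies_le2 S u v x : isoterm S xyyx -> satisfies S u v ->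
  0 < occ u x <= 2 -> occ v x = occ u x.
Proof.
move=> iso uv occx.
have uv' := satisfies_pmap (proj [:: x]) uv.
have occP w : occ (pmap (proj [:: x]) w) 0 = occ w x by rewrite occ_pmap_proj.
rewrite (nseq_occ0 (all_pmap_proj [:: x] u)) (nseq_occ0 (all_pmap_proj [:: x] v)) in uv'.
rewrite !occP in uv'.
move: occx uv'; case: (occ u x) => [|[|[|n]]] // _ uv'.
- have nz : is_word (subst (fun=> [:: 0]) (nseq (occ v x) 0) ++ [:: 1; 1; 0]).
    by rewrite /is_word -size_eq0 size_cat addn3.
  have := isoterm_subst_ctx (a := [::]) (sig := fun=> [:: 0]) iso uv' erefl nz.
  by move=> /(congr1 size); rewrite cat0s size_cat size_subst_letter size_nseq addn3 => -[].
- have := isoterm_subst_ctx (a := [:: 0]) (b := [:: 0]) (sig := fun=> [:: 1]) iso uv'.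
  move=> /(_ erefl isT) /(congr1 size).
  by rewrite /= size_cat size_subst_letter size_nseq addn1 => -[].
Qed.

Fixpoint words (n k : nat) : seq word :=
  if n is n'.+1 then [seq c :: w | c <- iota 0 k, w <- words n' k] else [:: [::]].

Lemma mem_words k w : all (fun c => c < k) w -> w \in words (size w) k.
Proof.
elim: w => [|z w IH] //= /andP[zk /IH wk].
by apply: allpairs_f => //; rewrite mem_iota.
Qed.

Lemma size_letters3 w : all (fun c => c < 3) w -> size w = occ w 0 + occ w 1 + occ w 2.
Proof.
rewrite /occ; elim: w => [|z w IH] //= /andP[zk /IH ->].
by case: z zk => [|[|[|z]]] //= _; rewrite ?add0n ?add1n ?addSn ?addnS.
Qed.

Definition substitutions : seq (seq word) :=
  let ws := flatten [seq words n 2 | n <- iota 0 3] in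
  [seq a :: bc | a <- ws, bc <- [seq [:: b; c] | b <- ws, c <- ws]].

Definition contexts : seq (word * word) :=
  [seq (take i xyyx, drop j xyyx) | i <- iota 0 5, j <- iota 0 5].

Definition refutes_in_xyyx (p q : word) : bool :=
  has (fun sl => has (fun ab =>
      [&& ab.1 ++ subst (nth [::] sl) p ++ ab.2 == xyyx,
          is_word (ab.1 ++ subst (nth [::] sl) q ++ ab.2)
        & ab.1 ++ subst (nth [::] sl) q ++ ab.2 != xyyx]) contexts) substitutions.

Lemma refutes_in_xyyx_sound S p q : isoterm S xyyx -> satisfies S p q ->
  ~~ refutes_in_xyyx p q.
Proof.
move=> iso pq; apply/hasP => -[sl _] /hasP[[a b] _] /and3P[/eqP ep nq].
by rewrite (isoterm_subst_ctx iso pq ep nq) eqxx.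
Qed.

Definition same_content3 (U V : word) : bool := all (fun c => occ U c == occ V c) (iota 0 3).

Definition first_occ_order_decided (cond : pred word) : bool :=
  all (fun U => all (fun V => refutes_in_xyyx U V || refutes_in_xyyx V U)
                  [seq V <- words (size U) 3 |
                     same_content3 U V & ~~ (pos V (0, 1) < pos V (1, 1))])
      [seq U <- flatten [seq words n 3 | n <- iota 0 6] | cond U].

Lemma first_occ_order_small cond S U V : first_occ_order_decided cond ->
  isoterm S xyyx -> satisfies S U V -> all (fun c => c < 3) U -> all (fun c => c < 3) V ->
  size U < 6 -> cond U -> (forall c, c < 3 -> occ U c = occ V c) ->
  pos V (0, 1) < pos V (1, 1).
Proof.
move=> dec iso UV U3 V3 szU condU occUV; apply: contraT => ltVn.
have sizeUV : size V = size U by rewrite !size_letters3 // !occUV.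
have U_in : U \in [seq U <- flatten [seq words n 3 | n <- iota 0 6] | cond U].
  by rewrite mem_filter condU; apply/flatten_mapP; exists (size U); rewrite ?mem_iota ?mem_words.
have V_in : V \in [seq V <- words (size U) 3 |
                     same_content3 U V & ~~ (pos V (0, 1) < pos V (1, 1))].
  rewrite mem_filter -sizeUV mem_words // ltVn !andbT.
  by apply/allP => c; rewrite mem_iota => /andP[_ c3]; rewrite occUV.
have := allP (allP dec U U_in) V V_in.
rewrite (negbTE (refutes_in_xyyx_sound iso UV)).
by rewrite (negbTE (refutes_in_xyyx_sound iso (satisfies_sym UV))).
Qed.

Definition pattern_not_both_twice (U : word) : bool :=
  [&& 0 < occ U 0 <= 2, 0 < occ U 1 <= 2, occ U 2 == 0, (occ U 0 < 2) || (occ U 1 < 2)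
    & pos U (0, 1) < pos U (1, 1)].

Definition pattern_both_twice (U : word) : bool :=
  [&& occ U 0 == 2, occ U 1 == 2, occ U 2 == 1, pos U (0, 1) < pos U (1, 1),
      pos U (1, 1) < pos U (2, 1) < pos U (1, 2) & pos U (0, 2) < pos U (2, 1)].

Lemma pattern_not_both_twice_decided : first_occ_order_decided pattern_not_both_twice.
Proof. by vm_compute. Qed.

Lemma pattern_both_twice_decided : first_occ_order_decided pattern_both_twice.
Proof. by vm_compute. Qed.

Lemma first_occ_order_proj cond S u v (x y t : nat) : first_occ_order_decided cond ->
  isoterm S xyyx -> satisfies S u v -> uniq [:: x; y; t] ->
  occ u x + occ u y + occ u t < 6 ->
  occ v x = occ u x -> occ v y = occ u y -> occ v t = occ u t ->
  0 < occ u x -> 0 < occ u y -> cond (pmap (proj [:: x; y; t]) u) ->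
  pos v (x, 1) < pos v (y, 1).
Proof.
move=> dec iso uv uxyt small vx vy vt ux uy condU.
have occP w i : i < 3 -> occ (pmap (proj [:: x; y; t]) w) i = occ w (nth 0 [:: x; y; t] i).
  by move=> lti; rewrite occ_pmap_proj.
rewrite -(pos_pmap_proj (w := v) (i := 0) (j := 1) uxyt) ?vx ?vy ?ux ?uy //.
apply: (first_occ_order_small dec iso (satisfies_pmap _ uv)) condU _ => //;
  try exact: all_pmap_proj.
- by rewrite size_letters3 ?occP //; exact: all_pmap_proj.
- by move=> [|[|[|c]]] // _; rewrite !occP.
Qed.

Lemma exists_fresh (w : word) : exists t, t \notin w.
Proof.
exists (\max_(z <- w) z).+1; apply/negP => /(@leq_bigmax_seq _ w xpredT id) /(_ isT).
by rewrite ltnn.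
Qed.

Lemma first_occ_order_kept S u v (x y : nat) :
  isoterm S xyyx -> satisfies S u v -> x != y ->
  0 < occ u x <= 2 -> 0 < occ u y <= 2 -> pos u (x, 1) < pos u (y, 1) ->
  (occ u x = 2 -> occ u y = 2 ->
     exists t : nat, [/\ occ u t = 1,
       pos u (y, 1) < pos u (t, 1) < pos u (y, 2) &
       pos u (x, 2) < pos u (t, 1) < pos u (y, 2)]) ->
  pos v (x, 1) < pos v (y, 1).
Proof.
move=> iso uv nxy ux uy lt1 sep.
have vx := occ_satisfies_le2 iso uv ux; have vy := occ_satisfies_le2 iso uv uy.
case/andP: ux => ux0 ux2; case/andP: uy => uy0 uy2.
have [/andP[/eqP x2 /eqP y2]|not_both] := boolP ((occ u x == 2) && (occ u y == 2)).
- have [t [t1 /andP[yt ty] /andP[xt _]]] := sep x2 y2.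
  have uxyt : uniq [:: x; y; t].
    rewrite /= !inE andbT negb_or nxy /=.
    by apply/andP; split; apply/negP => /eqP e; move: t1; rewrite -e ?x2 ?y2.
  have posU i j k l := pos_pmap_proj (w := u) (i := i) (j := j) (k := k) (l := l) uxyt.
  apply: (first_occ_order_proj pattern_both_twice_decided iso uv uxyt) => //.
  + by rewrite x2 y2 t1.
  + by apply: occ_satisfies_le2 iso uv _; rewrite t1.
  + rewrite /pattern_both_twice !occ_pmap_proj // x2 y2 t1 /=.
    rewrite (posU 0 1) ?(posU 1 2) ?(posU 2 1) ?(posU 0 2);
      by rewrite /= ?x2 ?y2 ?t1 ?lt1 ?yt ?ty ?xt.
- (* a fresh third letter lets one decision lemma, over three letters, cover this case too *)
  have [t] := exists_fresh (u ++ v); rewrite mem_cat negb_or => /andP[tu tv].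
  have [ut vt] : occ u t = 0 /\ occ v t = 0 by split; apply/count_memPn.
  have uxyt : uniq [:: x; y; t].
    by rewrite /= !inE andbT negb_or nxy /=; apply/andP; split; apply: contraNneq tu => <-;
      rewrite -has_pred1 has_count.
  apply: (first_occ_order_proj pattern_not_both_twice_decided iso uv uxyt) => //.
  + by rewrite ut addn0 (leq_ltn_trans (leq_add ux2 uy2)).
  + by rewrite ut vt.
  + rewrite /pattern_not_both_twice !occ_pmap_proj //= ut ux0 ux2 uy0 uy2.
    rewrite (pos_pmap_proj uxyt) ?ux0 ?uy0 //= lt1 andbT.
    by rewrite !ltn_neqAle ux2 uy2 !andbT -negb_and.
Qed.

Theorem lemma3p6 (S : monoid) (u : word) (x y : nat) :
  isoterm S [:: 0; 1; 1; 0] ->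
  x \in u -> y \in u -> x != y ->
  occ u x <= 2 -> occ u y <= 2 ->
  pos u (x, 1) < pos u (y, 1) ->
  (occ u x = 2 -> occ u y = 2 ->
     exists t : nat, [/\ occ u t = 1,
       pos u (y, 1) < pos u (t, 1) < pos u (y, 2) &
       pos u (x, 2) < pos u (t, 1) < pos u (y, 2)]) ->
  stable S u [:: (x, 1); (y, 1)].
Proof.
move=> iso xu yu nxy ux2 uy2 lt1 sep.
have ux : 0 < occ u x <= 2 by rewrite occ_gt0.
have uy : 0 < occ u y <= 2 by rewrite occ_gt0.
split=> [o|v _ uv].
  by rewrite !inE => /orP[] /eqP ->; rewrite /is_occ /= occ_gt0.
have vx := occ_satisfies_le2 iso uv ux; have vy := occ_satisfies_le2 iso uv uy.
have lt1v := first_occ_order_kept iso uv nxy ux uy lt1 sep.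
split; last split.
- by move=> o; rewrite !inE => /orP[] /eqP ->; rewrite /= ?vx ?vy.
- by move=> o; rewrite !inE => /orP[] /eqP ->; rewrite /is_occ /= ?vx ?vy occ_gt0.
- move=> o1 o2; rewrite !inE => /orP[] /eqP -> /orP[] /eqP ->; rewrite ?ltnn ?lt1 ?lt1v //.
  by rewrite ltnNge (ltnW lt1) ltnNge (ltnW lt1v).
Qed.
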